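(* Let $\ell\ge2$ and $k\ge1$, and let $\lambda$ be an $\ell$-core with exactly $k$ nonzero parts. Then: (1) in each row of $\lambda$, exactly one of the boxes deleted in forming $\widetilde{\Phi_\ell^k}(\lambda)$ is a skew box of $\lambda$ with respect to $\ell$; (2) if $\mathsf{B}$ is a box of $\lambda$ that is not deleted, and $\widetilde{\mathsf{B}}$ is the corresponding box of $\widetilde{\Phi_\ell^k}(\lambda)$, then $\mathsf{B}$ is a skew box of $\lambda$ with respect to $\ell$ if and only if $\widetilde{\mathsf{B}}$ is a skew box of $\widetilde{\Phi_\ell^k}(\lambda)$ with respect to $\ell-1$.
   Context: Partitions are in English notation; box $(x,y)$ is in row $x$, column $y$. The hook length $h^\mu_{\mathsf{B}}$ of a box $\mathsf{B}=(a,c)$ of $\mu$ is the number of boxes of $\mu$ in row $a$ weakly right of $\mathsf{B}$ plus the number in column $c$ strictly below $\mathsf{B}$. An $m$-core is a partition none of whose hook lengths is divisible by $m$. For a partition $\mu$ and integer $m$, a box $\mathsf{B}$ of $\mu$ is a skew box with respect to $m$ if $h^\mu_{\mathsf{B}}\le m$ (i.e. it is not among the boxes of hook length $>m$). For an $\ell$-core $\lambda$ with $k$ nonzero parts, $\widetilde{\Phi_\ell^k}(\lambda)$ is obtained from the diagram of $\lambda$ by deleting every column $y$ with $h^\lambda_{(1,y)}\equiv h^\lambda_{(1,1)}\pmod\ell$ (in particular column 1) and shifting the remaining columns left, preserving their order; each non-deleted box $\mathsf{B}$ of $\lambda$ thereby corresponds to a box $\widetilde{\mathsf{B}}$ of $\widetilde{\Phi_\ell^k}(\lambda)$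 in the same row. Equivalently, $\widetilde{\Phi_\ell^k}(\lambda)$ is the transpose of $\Phi_\ell^k(\lambda^{tr})$, where for an $\ell$-core $\nu$ with first part $k$, $\Phi_\ell^k(\nu)$ deletes all rows $x$ of $\nu$ with $h^\nu_{(x,1)}\equiv h^\nu_{(1,1)}\pmod\ell$. It is known that $\widetilde{\Phi_\ell^k}(\lambda)$ is an $(\ell-1)$-core with at most $k$ nonzero parts. *)

From mathcomp Require Import all_boot.
Set Implicit Arguments. Unset Strict Implicit. Unset Printing Implicit Defensive.

(* A partition is a seq nat of its nonzero parts in weakly decreasing order.
   Rows and columns are indexed from 1 (English notation): box (x,y) is in
   row x, column y. *)
Definition is_partition (la : seq nat) : Prop :=
  sorted geq la /\ all (fun p => 0 < p) la.

Definition row (la : seq nat) (x : nat) : nat := nth 0 la x.-1.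

Definition col (la : seq nat) (y : nat) : nat := count (fun p => y <= p) la.

Definition is_box (la : seq nat) (x y : nat) : bool :=
  [&& 1 <= x, x <= size la, 1 <= y & y <= row la x].

Definition hook (la : seq nat) (x y : nat) : nat :=
  (row la x - y + 1) + (col la y - x).

Definition is_core (m : nat) (la : seq nat) : Prop :=
  forall x y, is_box la x y -> ~~ (m %| hook la x y).

Definition skew_box (m : nat) (la : seq nat) (x y : nat) : bool :=
  is_box la x y && (hook la x y <= m).

(* column y (1 <= y <= lambda_1) is deleted by Phi~_l^k *)
Definition deleted_col (l : nat) (la : seq nat) (y : nat) : bool :=
  [&& 1 <= y, y <= row la 1 & hook la 1 y == hook la 1 1 %[mod l]].

Definition new_col (l : nat) (la : seq nat) (y : nat) : nat :=
  count (fun c => ~~ deleted_col l la c) (iota 1 y).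

(* Phi~_l^k(lambda): delete the marked columns and shift left;
   rows that become empty are dropped (they are trailing). *)
Definition Phi_tilde (l : nat) (la : seq nat) : seq nat :=
  filter (fun p => 0 < p) [seq new_col l la p | p <- la].

From mathcomp Require Import all_boot zify.
Set Implicit Arguments. Unset Strict Implicit. Unset Printing Implicit Defensive.

(* Write h(x,y) for hook lengths and r for the residue of h(x,1) modulo l.  The
   hooks of row x together with the differences h(x,1) - h(x',1), x' > x, are
   exactly 1, ..., h(x,1); since no h(x',1) is a multiple of l, r is the hook of
   a unique box of row x.  As h(x,y) - h(x,1) = col y - col 1 - (y - 1) does not
   depend on x, column y is deleted iff h(x,y) = h(x,1) mod l, so that box is the
   only deleted skew box of row x.
   Deleting columns lowers the hook h of a kept box by the number N of deleted
   boxes to its right.  Their hooks are distinct, smaller than h and congruent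
   mod l, so N <= (h - 2)/l + 1; and N >= 1 when h = l, since the box with hook
   r then lies to the right.  These two bounds give h <= l iff h - N <= l - 1. *)

Lemma is_box_row (s : seq nat) x y : is_box s x y = [&& 0 < x, 0 < y & y <= row s x].
Proof.
rewrite /is_box /row; case: x => //= x; case: y => [|y] /=; first by rewrite andbF.
by case: (ltnP x (size s)) => [//|Hx]; rewrite nth_default.
Qed.

Lemma is_box_first_col (s : seq nat) x : all (fun p => 0 < p) s -> 0 < x <= size s ->
  is_box s x 1.
Proof.
move=> s_pos /andP[x_gt0 x_le]; rewrite is_box_row x_gt0 /=; apply: (allP s_pos).
by rewrite /row mem_nth // prednK.
Qed.

Lemma col_nonincr (s : seq nat) y1 y2 : y1 <= y2 -> col s y2 <= col s y1.
Proof. by move=> Hy; apply: sub_count => p; apply: leq_trans. Qed.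

Lemma sorted_geq_count_leq (s : seq nat) y i : sorted geq s -> 0 < y ->
  (i < count (leq y) s) = (y <= nth 0 s i).
Proof.
elim: s i => [|a s IH] i Hs Hy /=; first by rewrite nth_nil; case: y Hy.
have le_a : all (geq a) s := order_path_min (rev_trans leq_trans) Hs.
case: (leqP y a) => Hya.
  by case: i => [|i] //=; rewrite add1n ltnS IH // (path_sorted Hs).
have s_lt_y j : nth 0 s j < y.
  apply: leq_ltn_trans Hya; case: (ltnP j (size s)) => Hj; last by rewrite nth_default.
  exact: (allP le_a _ (mem_nth 0 Hj)).
have -> : count (leq y) s = 0.
  apply/eqP; rewrite -leqn0 leqNgt -has_count; apply/hasPn => p /(nthP 0)[j _ <-].
  by rewrite /= -ltnNge.
by case: i => [|i] //=; apply/esym/negbTE; rewrite -ltnNge.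
Qed.

Lemma hook_gt0 (s : seq nat) x y : 0 < hook s x y.
Proof. by rewrite /hook addn1. Qed.

Lemma nth_filter_gt0 (s : seq nat) i : sorted geq s ->
  nth 0 [seq p <- s | 0 < p] i = nth 0 s i.
Proof.
elim: s i => [|a s IH] i Hs /=; first by rewrite !nth_nil.
case: (posnP a) => [a0 | a_gt0]; last by case: i => //= i; rewrite IH // (path_sorted Hs).
have s_le0 : all (geq 0) s by rewrite -a0; apply: order_path_min (rev_trans leq_trans) Hs.
have /all_pred1P -> : all (pred1 0) s by apply: sub_all s_le0 => p; rewrite /= leqn0.
by rewrite filter_nseq /= nth_nil a0; case: i => [|i] //=; rewrite nth_nseq if_same.
Qed.

Lemma uniq_eqmod_size (l m : nat) (s : seq nat) : 0 < l -> uniq s ->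
  {in s &, forall a b, a = b %[mod l]} -> {in s, forall a, 0 < a <= m} ->
  size s <= m.-1 %/ l + 1.
Proof.
move=> l_gt0 uniq_s eqmod_s bnd_s.
rewrite -(size_map (fun a => a.-1 %/ l)) -[_ + 1](size_iota 0); apply: uniq_leq_size.
- rewrite map_inj_in_uniq // => a b sa sb Ediv.
  have /andP[a_gt0 _] := bnd_s a sa; have /andP[b_gt0 _] := bnd_s b sb.
  have Emod : a.-1 %% l = b.-1 %% l.
    by apply/eqP; rewrite -(eqn_modDr 1) !addn1 !prednK // (eqmod_s a b sa sb).
  by move: (divn_eq a.-1 l) (divn_eq b.-1 l); rewrite Ediv Emod; lia.
- move=> _ /mapP[a sa ->]; have /andP[_ a_le] := bnd_s a sa.
  by rewrite mem_iota add0n addn1 ltnS leq_div2r //; lia.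
Qed.

Lemma new_col_mono l la : {homo new_col l la : p q / p <= q}.
Proof. by move=> p q Hpq; rewrite /new_col -(subnKC Hpq) iotaD count_cat leq_addr. Qed.

Lemma new_colD l la y r : new_col l la (y + r) =
  new_col l la y + count (predC (deleted_col l la)) (iota y.+1 r).
Proof. by rewrite /new_col iotaD count_cat add1n. Qed.

Lemma new_col_kept l la y : 0 < y -> ~~ deleted_col l la y ->
  new_col l la y = (new_col l la y.-1).+1.
Proof. by case: y => // y _ kept; rewrite -[y.+1]addn1 new_colD /= kept addn0 !addn1. Qed.

Lemma threshold_shift l h m n : 1 < l -> m + n = h ->
  n <= h.-2 %/ l + 1 -> (h = l -> 0 < n) -> (h <= l) = (m <= l.-1).
Proof.
move=> l_gt1 Emn; have := divn_eq h.-2 l; have := ltn_pmod h.-2 (ltnW l_gt1).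
set q := h.-2 %/ l; set r := h.-2 %% l => r_lt Eh n_le n_gt0.
case: (ltngtP h l) => [h_lt | h_gt | h_eq]; last by have := n_gt0 h_eq; lia.
- lia.
- by case: (posnP q) => [q0 | q_gt0]; nia.
Qed.

Section Diagram.

Variable la : seq nat.
Hypothesis la_sorted : sorted geq la.

Lemma row_nonincr x1 x2 : x1 <= x2 -> row la x2 <= row la x1.
Proof.
move=> Hx; rewrite /row; case: (ltnP x2.-1 (size la)) => Hx2; last by rewrite nth_default.
apply: (sorted_leq_nth (rev_trans leq_trans) leqnn) => //; rewrite ?inE; lia.
Qed.

Lemma leq_col_row x y : 0 < x -> 0 < y -> (x <= col la y) = (y <= row la x).
Proof. by case: x => // x _ Hy; rewrite -sorted_geq_count_leq. Qed.

Lemma is_box_col x y : is_box la x y = [&& 0 < x, 0 < y & x <= col la y].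
Proof. by rewrite is_box_row; case: x => // x; case: y => // y; rewrite leq_col_row. Qed.

Lemma is_box_bounds x y : is_box la x y ->
  [/\ 0 < x, 0 < y, y <= row la x & x <= col la y].
Proof.
move=> Bxy; move: (Bxy); rewrite is_box_row => /and3P[? ? ?].
by move: Bxy; rewrite is_box_col => /and3P[].
Qed.

Lemma hook_ltr x y1 y2 : is_box la x y2 -> y1 < y2 -> hook la x y2 < hook la x y1.
Proof.
move=> /is_box_bounds[? ? ? ?] Hy; have := col_nonincr la (ltnW Hy); rewrite /hook; lia.
Qed.

Lemma hook_ler x y1 y2 : is_box la x y2 -> y1 <= y2 -> hook la x y2 <= hook la x y1.
Proof. by move=> Hb; rewrite leq_eqVlt => /predU1P[-> // | /(hook_ltr Hb)/ltnW]. Qed.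

Lemma hook_ltc x1 x2 y : is_box la x2 y -> x1 < x2 -> hook la x2 y < hook la x1 y.
Proof.
move=> /is_box_bounds[? ? ? ?] Hx; have := row_nonincr (ltnW Hx); rewrite /hook; lia.
Qed.

Lemma hook_inj_row x y1 y2 : is_box la x y1 -> is_box la x y2 ->
  hook la x y1 = hook la x y2 -> y1 = y2.
Proof.
move=> B1 B2 Eh; case: (ltngtP y1 y2) => // Hy.
- by have := hook_ltr B2 Hy; rewrite Eh ltnn.
- by have := hook_ltr B1 Hy; rewrite Eh ltnn.
Qed.

(* h(x,y') + h(x',y) - h(x,y) = (row x' - y') + (col y' - x') + 1: the hook of
   (x',y') if this box lies in la, and negative otherwise. *)
Lemma hook_addrc_neq x y x' y' : is_box la x y' -> is_box la x' y ->
  y <= y' -> x < x' -> hook la x y' + hook la x' y != hook la x y.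
Proof.
move=> /is_box_bounds[? ? ? ?] /is_box_bounds[? ? ? ?] Hy Hx.
have := col_nonincr la Hy.
have : (x' <= col la y') = (y' <= row la x') by apply: leq_col_row; lia.
rewrite /hook; case: leqP; case: leqP; lia.
Qed.

Lemma hook_inj_col x1 x2 y : is_box la x1 y -> is_box la x2 y ->
  hook la x1 y = hook la x2 y -> x1 = x2.
Proof.
move=> B1 B2 Eh; case: (ltngtP x1 x2) => // Hx.
- by have := hook_ltc B2 Hx; rewrite Eh ltnn.
- by have := hook_ltc B1 Hx; rewrite Eh ltnn.
Qed.

Definition arm_hooks x y := [seq hook la x y' | y' <- iota y (row la x - y).+1].

Definition leg_gaps x y :=
  [seq hook la x y - hook la x' y | x' <- iota x.+1 (col la y - x)].

Lemma mem_arm x y y' : is_box la x y -> y' \in iota y (row la x - y).+1 ->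
  y <= y' /\ is_box la x y'.
Proof.
move=> /is_box_bounds[? ? ? ?]; rewrite mem_iota => /andP[? ?].
by split=> //; rewrite is_box_row; apply/and3P; split; lia.
Qed.

Lemma mem_leg x y x' : is_box la x y -> x' \in iota x.+1 (col la y - x) ->
  x < x' /\ is_box la x' y.
Proof.
move=> /is_box_bounds[? ? ? ?]; rewrite mem_iota => /andP[? ?].
by split=> //; rewrite is_box_col; apply/and3P; split; lia.
Qed.

Lemma arm_leg_cover x y : is_box la x y ->
  arm_hooks x y ++ leg_gaps x y =i iota 1 (hook la x y).
Proof.
move=> Bxy; set h := hook la x y.
have uniq_arm : uniq (arm_hooks x y).
  rewrite map_inj_in_uniq ?iota_uniq // => y1 y2 /(mem_arm Bxy)[_ B1] /(mem_arm Bxy)[_ B2].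
  exact: hook_inj_row.
have uniq_leg : uniq (leg_gaps x y).
  rewrite map_inj_in_uniq ?iota_uniq // => x1 x2 /(mem_leg Bxy)[L1 B1] /(mem_leg Bxy)[L2 B2].
  move: (hook_ltc B1 L1) (hook_ltc B2 L2) => H1 H2 E.
  by apply: hook_inj_col B1 B2 _; rewrite -/h; lia.
have disjoint_arm_leg : ~~ has (mem (arm_hooks x y)) (leg_gaps x y).
  apply/hasPn => _ /mapP[x' /(mem_leg Bxy)[Lx Bx] ->].
  apply/mapP => -[y' /(mem_arm Bxy)[Ly By] E].
  have := hook_ltc Bx Lx; have := hook_addrc_neq By Bx Ly Lx; rewrite -E -/h; lia.
have sub : {subset arm_hooks x y ++ leg_gaps x y <= iota 1 h}.
  move=> v; rewrite mem_cat mem_iota => /orP[] /mapP.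
  - move=> [y' /(mem_arm Bxy)[Ly By] ->].
    by have := hook_ler By Ly; have := hook_gt0 la x y'; lia.
  - by move=> [x' /(mem_leg Bxy)[Lx Bx] ->]; have := hook_ltc Bx Lx; lia.
have size_le : size (iota 1 h) <= size (arm_hooks x y ++ leg_gaps x y).
  by rewrite size_cat !size_map !size_iota /h /hook; lia.
have uniq_cat : uniq (arm_hooks x y ++ leg_gaps x y).
  by rewrite cat_uniq uniq_arm uniq_leg disjoint_arm_leg.
by have [_] := uniq_min_size uniq_cat sub size_le.
Qed.

Lemma hook_cover x y v : is_box la x y -> 0 < v <= hook la x y ->
  (exists y', [/\ y <= y', is_box la x y' & hook la x y' = v]) \/
  (exists x', [/\ x < x', is_box la x' y & hook la x' y + v = hook la x y]).
Proof.
move=> Bxy Hv; have : v \in iota 1 (hook la x y) by rewrite mem_iota; lia.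
rewrite -arm_leg_cover // mem_cat => /orP[] /mapP.
- by move=> [y' /(mem_arm Bxy)[Ly By] ->]; left; exists y'.
- move=> [x' /(mem_leg Bxy)[Lx Bx] ->]; right; exists x'; split=> //.
  by have := hook_ltc Bx Lx; lia.
Qed.

Lemma hook_col1 x y : is_box la x y ->
  hook la x y + (y.-1 + col la 1) = hook la x 1 + col la y.
Proof.
move=> /is_box_bounds[? ? ? ?]; have : col la y <= col la 1 by apply: col_nonincr.
rewrite /hook; lia.
Qed.

Section Deletion.

Variable l : nat.

Lemma hook_eqmod_hook1 x y : is_box la x y ->
  (hook la x y == hook la x 1 %[mod l]) = (col la y == y.-1 + col la 1 %[mod l]).
Proof. by move=> Bxy; rewrite -(eqn_modDr (y.-1 + col la 1)) hook_col1 // eqn_modDl. Qed.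

Lemma deleted_colE x y : is_box la x y ->
  deleted_col l la y = (hook la x y == hook la x 1 %[mod l]).
Proof.
move=> Bxy; have [x_gt0 y_gt0 _ _] := is_box_bounds Bxy.
have y_le_row1 : y <= row la 1.
  by apply: leq_trans (row_nonincr x_gt0); case/is_box_bounds: Bxy.
have B1y : is_box la 1 y by rewrite is_box_row y_gt0 y_le_row1.
by rewrite /deleted_col y_gt0 y_le_row1 !hook_eqmod_hook1.
Qed.

Lemma row_Phi x : row (Phi_tilde l la) x = new_col l la (row la x).
Proof.
have map_sorted : sorted geq [seq new_col l la p | p <- la].
  by apply: homo_sorted la_sorted => p q; apply: new_col_mono.
rewrite /row /Phi_tilde nth_filter_gt0 //.
by case: (ltnP x.-1 (size la)) => Hx; [rewrite (nth_map 0) | rewrite !nth_default ?size_map].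
Qed.

Lemma col_Phi y : 0 < y -> ~~ deleted_col l la y ->
  col (Phi_tilde l la) (new_col l la y) = col la y.
Proof.
move=> y_gt0 kept; rewrite /col /Phi_tilde count_filter count_map; apply: eq_count => p /=.
have := new_col_kept y_gt0 kept; case: (leqP y p) => Hyp Ey.
- by have := new_col_mono l la Hyp; lia.
- have : p <= y.-1 by lia.
  by move/(new_col_mono l la); lia.
Qed.

Lemma hook_Phi x y : is_box la x y -> ~~ deleted_col l la y ->
  is_box (Phi_tilde l la) x (new_col l la y) /\
  hook (Phi_tilde l la) x (new_col l la y) +
    count (deleted_col l la) (iota y.+1 (row la x - y)) = hook la x y.
Proof.
move=> Bxy kept; have [x_gt0 y_gt0 y_le x_le] := is_box_bounds Bxy.
have row_Phi_x := new_colD l la y (row la x - y).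
rewrite subnKC // -row_Phi in row_Phi_x.
have := count_predC (deleted_col l la) (iota y.+1 (row la x - y)); rewrite size_iota.
have := new_col_kept y_gt0 kept.
split; first by rewrite is_box_row x_gt0 row_Phi_x; apply/andP; split; lia.
by rewrite /hook col_Phi //; lia.
Qed.

Hypothesis l_gt1 : 1 < l.
Hypothesis la_pos : all (fun p => 0 < p) la.
Hypothesis la_core : is_core l la.

Let l_gt0 : 0 < l := ltnW l_gt1.

Lemma hook_residue_in_row x : is_box la x 1 ->
  exists2 y, is_box la x y & hook la x y = hook la x 1 %% l.
Proof.
move=> Bx1; have r_gt0 : 0 < hook la x 1 %% l by rewrite lt0n; apply: la_core.
have r_le : 0 < hook la x 1 %% l <= hook la x 1 by rewrite r_gt0 leq_mod.
have [[y [_ Bxy <-]] | [x' [_ Bx'1 Ex']]] := hook_cover Bx1 r_le; first by exists y.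
case/negP: (la_core Bx'1).
suff -> : hook la x' 1 = hook la x 1 %/ l * l by apply: dvdn_mull.
by move: Ex'; rewrite {2}(divn_eq (hook la x 1) l); lia.
Qed.

Lemma deleted_skewE x y : is_box la x y ->
  (deleted_col l la y && skew_box l la x y) = (hook la x y == hook la x 1 %% l).
Proof.
move=> Bxy; rewrite /skew_box Bxy /= (deleted_colE Bxy).
apply/andP/eqP => [[/eqP E le_l] | E].
- have lt_l : hook la x y < l.
    by rewrite ltn_neqAle le_l andbT; apply: contraNneq (la_core Bxy) => ->.
  by rewrite -(modn_small lt_l) E.
- by rewrite E modn_mod eqxx ltnW ?ltn_pmod.
Qed.

Lemma deleted_skew_row_count x : 0 < x <= size la ->
  count (fun y => deleted_col l la y && skew_box l la x y) (iota 1 (row la x)) = 1.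
Proof.
move=> /andP[x_gt0 x_le].
have Bx1 : is_box la x 1 by apply: (is_box_first_col la_pos); rewrite x_gt0.
have [y0 By0 Ey0] := hook_residue_in_row Bx1.
rewrite (@eq_in_count _ _ (pred1 y0)) => [|y]; last first.
  rewrite mem_iota => Hy; have Bxy : is_box la x y by rewrite is_box_row x_gt0; lia.
  rewrite deleted_skewE // -Ey0 /=; apply/eqP/eqP => [|-> //].
  exact: hook_inj_row.
by rewrite count_uniq_mem ?iota_uniq // mem_iota; case/is_box_bounds: By0; lia.
Qed.

Lemma count_deleted_right_le x y : is_box la x y ->
  count (deleted_col l la) (iota y.+1 (row la x - y)) <= (hook la x y).-2 %/ l + 1.
Proof.
move=> Bxy; set I := iota y.+1 (row la x - y).
have mem_I z : z \in I -> y < z /\ is_box la x z.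
  rewrite mem_iota; case/is_box_bounds: Bxy => ? ? ? ? ?.
  by split; [lia | rewrite is_box_row; apply/and3P; split; lia].
rewrite -size_filter -(size_map (hook la x)) -[(hook la x y).-2]/(hook la x y).-1.-1.
apply: uniq_eqmod_size => //.
- rewrite map_inj_in_uniq ?filter_uniq ?iota_uniq // => z1 z2.
  rewrite !mem_filter => /andP[_ /mem_I[_ B1]] /andP[_ /mem_I[_ B2]].
  exact: hook_inj_row.
- move=> _ _ /mapP[z1 + ->] /mapP[z2 + ->]; rewrite !mem_filter.
  move=> /andP[D1 /mem_I[_ B1]] /andP[D2 /mem_I[_ B2]].
  rewrite (deleted_colE B1) in D1; rewrite (deleted_colE B2) in D2.
  by apply/eqP; rewrite (eqP D1) (eqP D2).
- move=> _ /mapP[z + ->]; rewrite mem_filter => /andP[_ /mem_I[Lz Bz]].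
  by rewrite hook_gt0 -ltnS prednK ?hook_gt0 ?hook_ltr.
Qed.

Lemma count_deleted_right_gt0 x y : is_box la x y -> hook la x y = l ->
  0 < count (deleted_col l la) (iota y.+1 (row la x - y)).
Proof.
move=> Bxy hook_l.
have Bx1 : is_box la x 1 by apply: (is_box_first_col la_pos); case/and4P: Bxy => -> -> _ _.
have [y0 By0 Ey0] := hook_residue_in_row Bx1.
have y_lt : y < y0.
  rewrite ltnNge; apply/negP => /(hook_ler Bxy); rewrite Ey0 hook_l leqNgt.
  by rewrite ltn_pmod.
rewrite -has_count; apply/hasP; exists y0.
  by rewrite mem_iota; case/is_box_bounds: By0; lia.
by have /andP[] : deleted_col l la y0 && skew_box l la x y0 by rewrite deleted_skewE // Ey0.
Qed.

Lemma skew_box_Phi x y : is_box la x y -> ~~ deleted_col l la y ->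
  skew_box l la x y = skew_box l.-1 (Phi_tilde l la) x (new_col l la y).
Proof.
move=> Bxy kept; have [B_Phi hook_Phi_eq] := hook_Phi Bxy kept.
rewrite /skew_box Bxy B_Phi /=.
apply: threshold_shift l_gt1 hook_Phi_eq (count_deleted_right_le Bxy) _.
exact: count_deleted_right_gt0.
Qed.

End Deletion.

End Diagram.

Theorem mainTheorem9 (l k : nat) (la : seq nat) :
  2 <= l -> 1 <= k -> is_partition la -> size la = k -> is_core l la ->
  (forall x, 1 <= x <= k ->
     count (fun y => deleted_col l la y && skew_box l la x y)
           (iota 1 (row la x)) = 1) /\
  (forall x y, is_box la x y -> ~~ deleted_col l la y ->
     skew_box l la x y = skew_box l.-1 (Phi_tilde l la) x (new_col l la y)).
Proof.
move=> l_gt1 _ [la_sorted la_pos] <- la_core; split=> [x | x y].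
- exact: (deleted_skew_row_count la_sorted l_gt1 la_pos la_core).
- exact: (skew_box_Phi la_sorted l_gt1 la_pos la_core).
Qed.
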